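(* Let $(C(G_i,S_i))_{i\in I}$ be an esperantist family of Cayley graphs of finite groups $G_i$ with symmetric generating sets $S_i$ (of common cardinality), and let $N_i\le G_i$ be subgroups such that $$\log(2[G_i:N_i])\ge\delta\log(2|G_i|)$$ for all $i$, for some $\delta>0$ independent of $i$. Then the family of Cayley–Schreier graphs $(C(G_i/N_i,S_i))_{i\in I}$ is also an esperantist family.
   Context: For a group $G$ with finite symmetric generating set $S$ and subgroup $H$, $C(G/H,S)$ is the $|S|$-regular graph (loops and multiple edges allowed) with vertex set $G/H$ and an edge from $xH$ to $sxH$ for each $s\in S$; for $H=1$ this is the Cayley graph $C(G,S)$. For a connected $r$-regular graph $\Gamma$, $\lambda_1(\Gamma)$ is the smallest nonzero eigenvalue of $r\,\mathrm{Id}-A(\Gamma)$. A family $(\Gamma_i)$ of connected $r$-regular graphs is esperantist if for every $N$ only finitely many $i$ have at most $N$ vertices, and there exist $c>0$, $A\ge0$ with $\lambda_1(\Gamma_i)\ge c/(\log 2|\Gamma_i|)^A$ for all $i$. *)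

From HB Require Import structures.
From mathcomp Require Import all_boot all_order all_fingroup.
From Stdlib Require Import Reals.

Set Implicit Arguments.
Unset Strict Implicit.
Unset Printing Implicit Defensive.

Local Open Scope group_scope.

Definition rsum (T : Type) (f : T -> R) (s : seq T) : R :=
  foldr (fun x acc => Rplus (f x) acc) 0%R s.

Definition schreier_vertices (gT : finGroupType) (H : {group gT}) : {set {set gT}} :=
  lcosets H [set: gT].

Definition schreier_rel (gT : finGroupType) (S : {set gT}) : rel {set gT} :=
  fun C D => [exists s in S, s *: C == D].

Definition schreier_connected (gT : finGroupType) (S : {set gT}) (H : {group gT}) : Prop :=
  forall C D, C \in schreier_vertices H -> D \in schreier_vertices H ->
    connect (schreier_rel S) C D.

(* lam is a (real) eigenvalue of |S| Id - A, where A is the adjacency matrix of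
   C(G/H,S): (A f)(xH) = sum_{s in S} f(s xH)  (loops and multiple edges counted). *)
Definition schreier_laplacian_eigenvalue (gT : finGroupType) (S : {set gT})
    (H : {group gT}) (lam : R) : Prop :=
  exists f : {set gT} -> R,
    (exists C, C \in schreier_vertices H /\ f C <> 0%R) /\
    forall C, C \in schreier_vertices H ->
      (INR #|S| * f C - rsum (fun s => f (s *: C)) (enum S) = lam * f C)%R.

Definition esperantist (I : Type) (gT : I -> finGroupType)
    (S : forall i, {set gT i}) (H : forall i, {group gT i}) (r : nat) : Prop :=
  (forall i, #|S i| = r /\ schreier_connected (S i) (H i)) /\
  (forall N : nat, exists l : list I, forall i,
      (#|schreier_vertices (H i)| <= N)%N -> List.In i l) /\
  (exists c A : R, (0 < c)%R /\ (0 <= A)%R /\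
     forall i lam, schreier_laplacian_eigenvalue (S i) (H i) lam -> lam <> 0%R ->
       (c / Rpower (ln (2 * INR #|schreier_vertices (H i)|)) A <= lam)%R).

(** Pulling an eigenfunction back along the covering C(G,S) -> C(G/N,S) shows
    that every eigenvalue of the Schreier graph is an eigenvalue of the Cayley
    graph, and the covering also carries connectivity down to the quotient.
    Since log(2[G:N]) is at least delta log(2|G|), a polylogarithmic spectral
    gap in terms of |G| is one in terms of [G:N] (at the cost of the factor
    delta^A), and a bound on [G:N] bounds |G|, so only finitely many quotients
    are small. *)

From HB Require Import structures.
From mathcomp Require Import all_boot all_order all_fingroup.
From Stdlib Require Import Reals Lra.

Set Implicit Arguments.
Unset Strict Implicit.

Local Open Scope group_scope.

Lemma connect_homo (T : finType) (e e' : rel T) (phi : T -> T) :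
  {homo phi : u v / e u v >-> e' u v} ->
  {homo phi : u v / connect e u v >-> connect e' u v}.
Proof.
move=> phi_e a b /connectP [p + ->]; elim: p a => [|y p IHp] a /=.
  by rewrite connect0.
by case/andP=> /phi_e eay /IHp; apply: connect_trans (connect1 eay).
Qed.

Lemma rsum_ext (T : Type) (f g : T -> R) (s : seq T) :
  f =1 g -> rsum f s = rsum g s.
Proof. by move=> fg; elim: s => [|x s IHs] //=; rewrite fg IHs. Qed.

Lemma mem_schreier_vertices (gT : finGroupType) (H : {group gT}) (x : gT) :
  x *: H \in schreier_vertices H.
Proof. by rewrite mem_lcosets mulGSid ?subsetT ?inE. Qed.

Section SchreierCoarsening.

Variables (gT : finGroupType) (S : {set gT}) (H N : {group gT}).
Hypothesis sHN : H \subset N.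

Lemma lcoset_mulg_subgroup (x : gT) : x *: H * N = x *: N.
Proof. by rewrite -mulgA mulSGid. Qed.

Lemma schreier_vertex_coarsen (C : {set gT}) :
  C \in schreier_vertices H -> C * N \in schreier_vertices N.
Proof.
by case/lcosetsP=> x _ ->; rewrite lcoset_mulg_subgroup mem_schreier_vertices.
Qed.

Lemma schreier_rel_coarsen (C D : {set gT}) :
  schreier_rel S C D -> schreier_rel S (C * N) (D * N).
Proof.
case/existsP=> s /andP [Ss /eqP <-]; apply/existsP; exists s.
by rewrite Ss mulgA eqxx.
Qed.

Lemma schreier_connected_coarsen :
  schreier_connected S H -> schreier_connected S N.
Proof.
move=> conH _ _ /lcosetsP [x _ ->] /lcosetsP [y _ ->].
rewrite -!lcoset_mulg_subgroup.
apply: (@connect_homo _ _ _ (fun C => C * N) schreier_rel_coarsen).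
exact: conH (mem_schreier_vertices _ _) (mem_schreier_vertices _ _).
Qed.

(* The pulled-back function C |-> f (C * N) is an eigenfunction because
   (s *: C) * N = s *: (C * N). *)
Lemma schreier_laplacian_eigenvalue_lift (lam : R) :
  schreier_laplacian_eigenvalue S N lam -> schreier_laplacian_eigenvalue S H lam.
Proof.
move=> [f [[C0 [/lcosetsP [x0 _ ->] fC0]] eig_f]].
exists (fun C => f (C * N)); split.
  by exists (x0 *: H); rewrite lcoset_mulg_subgroup mem_schreier_vertices.
move=> C HC; rewrite -(eig_f _ (schreier_vertex_coarsen HC)).
by congr (_ - _)%R; apply: rsum_ext => s /=; rewrite mulgA.
Qed.

End SchreierCoarsening.

Lemma card_schreier_vertices (gT : finGroupType) (H : {group gT}) :
  #|schreier_vertices H| = #|[set: gT] : H|.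
Proof. exact: card_lcosets. Qed.

Lemma le_exp_ln_div (d x y z : R) :
  (0 < d)%R -> (0 < x)%R -> (0 < y)%R -> (y <= z)%R ->
  (d * ln x <= ln y)%R -> (x <= exp (ln z / d))%R.
Proof.
move=> d_gt0 x_gt0 y_gt0 le_yz le_dx_y.
have le_ln_yz : (ln y <= ln z)%R.
  by case: le_yz => [/(ln_increasing _ _ y_gt0)/Rlt_le | ->]; [|apply: Rle_refl].
have le_lnx : (ln x <= ln z / d)%R.
  by apply: (Rmult_le_reg_l d) => //; rewrite /Rdiv; field_simplify; lra.
rewrite -[x]exp_ln //.
by case: le_lnx => [/exp_increasing/Rlt_le | ->]; [|apply: Rle_refl].
Qed.

Lemma Rdiv_Rpower_ln_le_compat (c A d u v lam : R) :
  (0 < c)%R -> (0 <= A)%R -> (0 < d)%R -> (0 < ln u)%R ->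
  (d * ln u <= ln v)%R ->
  (c / Rpower (ln u) A <= lam)%R ->
  (c * Rpower d A / Rpower (ln v) A <= lam)%R.
Proof.
move=> c_gt0 A_ge0 d_gt0 lnu_gt0 le_dlnu_lnv; apply: Rle_trans.
have dA_gt0 : (0 < Rpower d A)%R by apply: exp_pos.
have luA_gt0 : (0 < Rpower (ln u) A)%R by apply: exp_pos.
have le_pow : (Rpower d A * Rpower (ln u) A <= Rpower (ln v) A)%R.
  rewrite Rpower_mult_distr //; apply: Rle_Rpower_l => //; split => //.
  exact: Rmult_lt_0_compat.
apply: Rle_trans (_ : c * Rpower d A / (Rpower d A * Rpower (ln u) A) <= _)%R.
  apply: Rmult_le_compat_l; first by apply: Rlt_le; apply: Rmult_lt_0_compat.
  by apply: Rinv_le_contravar => //; apply: Rmult_lt_0_compat.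
by right; field; lra.
Qed.

Lemma double_INR_gt0 (n : nat) : (0 < n)%N -> (0 < 2 * INR n)%R.
Proof. by move=> /leP /(le_INR 1) /= n_ge1; lra. Qed.

Lemma ln_double_INR_gt0 (n : nat) : (0 < n)%N -> (0 < ln (2 * INR n))%R.
Proof. by move=> /leP /(le_INR 1) /= n_ge1; rewrite -ln_1; apply: ln_increasing; lra. Qed.

Lemma order_le_of_index_le (gT : finGroupType) (N : {group gT}) (delta : R) (M K : nat) :
  (0 < delta)%R ->
  (delta * ln (2 * INR #|gT|) <= ln (2 * INR #|[set: gT] : N|))%R ->
  (INR K > exp (ln (2 * INR M) / delta))%R ->
  (#|[set: gT] : N| <= M)%N -> (#|gT| <= K)%N.
Proof.
move=> delta_gt0 le_index ltK /leP/le_INR le_M.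
have card_gt0 : (0 < 2 * INR #|gT|)%R.
  by apply: double_INR_gt0; rewrite -cardsT cardG_gt0.
have := le_exp_ln_div delta_gt0 card_gt0 (double_INR_gt0 (indexg_gt0 _ N))
  (Rmult_le_compat_l 2 _ _ (Rlt_le _ _ Rlt_0_2) le_M) le_index.
by move=> le_order; apply/leP/INR_le; lra.
Qed.

Theorem proposition3p2 (I : Type) (gT : I -> finGroupType)
    (S : forall i, {set gT i}) (N : forall i, {group gT i}) (r : nat) (delta : R) :
  (forall i, <<S i>>%g = [set: gT i]) ->
  (forall i (x : gT i), x \in S i -> (x^-1)%g \in S i) ->
  esperantist S (fun i => 1%G) r ->
  (0 < delta)%R ->
  (forall i, (delta * ln (2 * INR #|gT i|) <= ln (2 * INR (#|[set: gT i] : N i|)%g))%R) ->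
  esperantist S N r.
Proof.
move=> _ _ [reg_con [few_small [c [A [c_gt0 [A_ge0 gap]]]]]] delta_gt0 le_index.
split; [|split].
- move=> i; have [card_S con1] := reg_con i; split => //.
  exact: schreier_connected_coarsen (sub1G (N i)) con1.
- move=> M; have [K ltK] := INR_unbounded (exp (ln (2 * INR M) / delta)).
  have [l small_in_l] := few_small K; exists l => i small_i; apply: small_in_l.
  rewrite !card_schreier_vertices indexg1 cardsT in small_i *.
  exact: order_le_of_index_le delta_gt0 (le_index i) ltK small_i.
- exists (c * Rpower delta A)%R, A; split; [|split] => //.
    by apply: Rmult_lt_0_compat => //; apply: exp_pos.
  move=> i lam /(schreier_laplacian_eigenvalue_lift (sub1G (N i))) eig_lam lam_neq0.
  rewrite card_schreier_vertices.
  apply: Rdiv_Rpower_ln_le_compat (le_index i) _ => //.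
    by apply: ln_double_INR_gt0; rewrite -cardsT cardG_gt0.
  by have := gap i lam eig_lam lam_neq0; rewrite card_schreier_vertices indexg1 cardsT.
Qed.
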